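(* Let $S_0,S_1,S_2\subseteq\{0,1,2\}^m$ be a meta-extendable collection of admissible sets, and let $T\subseteq\{0,1,2\}^r$ be admissible. Then \[T(S_0,S_1,S_2)=\bigcup_{t\in T} S_{t_1}\times\cdots\times S_{t_r}\subseteq\{0,1,2\}^{mr}\] is an admissible set.
   Context: A set $S\subseteq\{0,1,2\}^m$ is admissible if (1) for all distinct $s,s'\in S$ there are coordinates $i,j$ with $s_i=0\neq s'_i$ and $s_j\neq 0=s'_j$; and (2) for all distinct $s,s',s''\in S$ there is a coordinate $k$ such that the multiset $\{s_k,s'_k,s''_k\}$ equals $\{0,1,2\}$, $\{0,0,1\}$ or $\{0,0,2\}$. The weight of a vector is its number of nonzero coordinates. A collection $S_0,S_1,S_2\subseteq\{0,1,2\}^m$ of admissible sets is meta-extendable if: (1) for any $s\in S_0$ and $s'\in S_1\cup S_2$, the weight of $s$ is less than the weight of $s'$; (2) whenever $x,y\in S_0$ (not necessarily distinct) and $z\in S_1\cup S_2$, there is a coordinate $k$ with the multiset $\{x_k,y_k,z_k\}$ equal to $\{0,1,2\}$, $\{0,0,1\}$ or $\{0,0,2\}$; (3) whenever $x\in S_0$, $y\in S_1$, $z\in S_2$, there is a coordinate $k$ with the multiset $\{x_k,y_k,z_k\}$ equal to $\{0,1,2\}$, $\{0,0,1\}$ or $\{0,0,2\}$. Products $S_{t_1}\times\cdots\times S_{t_r}$ consist of concatenations of vectors. *)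

From mathcomp Require Import all_boot.
Set Implicit Arguments. Unset Strict Implicit. Unset Printing Implicit Defensive.

Definition vec (m : nat) := m.-tuple 'I_3.

Definition good3 (a b c : 'I_3) : bool :=
  let s := [:: nat_of_ord a; nat_of_ord b; nat_of_ord c] in
  perm_eq s [:: 0; 1; 2] || perm_eq s [:: 0; 0; 1] || perm_eq s [:: 0; 0; 2].

Definition separated3 m (x y z : vec m) : Prop :=
  exists k : 'I_m, good3 (tnth x k) (tnth y k) (tnth z k).

Definition admissible m (S : {set vec m}) : Prop :=
  (forall s s', s \in S -> s' \in S -> s != s' ->
     (exists i : 'I_m, (nat_of_ord (tnth s i) == 0) && (nat_of_ord (tnth s' i) != 0)) /\
     (exists j : 'I_m, (nat_of_ord (tnth s j) != 0) && (nat_of_ord (tnth s' j) == 0))) /\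
  (forall s s' s'', s \in S -> s' \in S -> s'' \in S ->
     s != s' -> s != s'' -> s' != s'' -> separated3 s s' s'').

Definition weight m (s : vec m) : nat := #|[pred i : 'I_m | nat_of_ord (tnth s i) != 0]|.

Definition meta_extendable m (S0 S1 S2 : {set vec m}) : Prop :=
  admissible S0 /\ admissible S1 /\ admissible S2 /\
  (forall s s', s \in S0 -> s' \in S1 :|: S2 -> weight s < weight s') /\
  (forall x y z, x \in S0 -> y \in S0 -> z \in S1 :|: S2 -> separated3 x y z) /\
  (forall x y z, x \in S0 -> y \in S1 -> z \in S2 -> separated3 x y z).

Definition block m r (v : vec (m * r)) (i : 'I_r) : vec m :=
  [tuple of mkseq (fun j => nth ord0 v (i * m + j)) m].

Definition selectS m (S0 S1 S2 : {set vec m}) (a : 'I_3) : {set vec m} :=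
  match nat_of_ord a with 0 => S0 | 1 => S1 | _ => S2 end.

Definition compose m r (T : {set vec r}) (S0 S1 S2 : {set vec m}) : {set vec (m * r)} :=
  [set v : vec (m * r) | [exists t in T,
     [forall i : 'I_r, block v i \in selectS S0 S1 S2 (tnth t i)]]].

From mathcomp Require Import all_boot.
From mathcomp Require Import zify.

Set Implicit Arguments. Unset Strict Implicit. Unset Printing Implicit Defensive.

(* Vectors of T(S0,S1,S2) built from the same word t of T differ in some
   block i, where the admissible set S_(t_i) separates them.  Otherwise the
   admissibility of T gives a coordinate i at which the words read 0 and a
   nonzero letter (for pairs), or {0,1,2}, {0,0,1} or {0,0,2} (for triples,
   using the pair condition when two of the three words coincide); in block i
   the weight condition, resp. conditions (2) and (3) of meta-extendability,
   then separate the vectors. *)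

Definition zero_nonzero m (x y : vec m) : Prop :=
  exists i : 'I_m, (tnth x i == 0 :> nat) && (tnth y i != 0 :> nat).

Lemma admissibleP m (S : {set vec m}) :
  admissible S <->
  (forall s s' : vec m, s \in S -> s' \in S -> s != s' -> zero_nonzero s s') /\
  (forall s s' s'' : vec m, s \in S -> s' \in S -> s'' \in S ->
     s != s' -> s != s'' -> s' != s'' -> separated3 s s' s'').
Proof.
split=> [[pairS tripleS] | [pairS tripleS]]; split=> //.
- by move=> s s' sS s'S /(pairS s s' sS s'S) [].
- move=> s s' sS s'S ss'; split; first exact: pairS.
  have [j /andP[s'j sj]] : zero_nonzero s' s by apply: pairS; rewrite // eq_sym.
  by exists j; rewrite s'j sj.
Qed.

Lemma good3C12 (a b c : 'I_3) : good3 a b c -> good3 b a c.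
Proof. by case: a b c => [[|[|[|//]]] ?] [[|[|[|//]]] ?] [[|[|[|//]]] ?]. Qed.

Lemma good3C23 (a b c : 'I_3) : good3 a b c -> good3 a c b.
Proof. by case: a b c => [[|[|[|//]]] ?] [[|[|[|//]]] ?] [[|[|[|//]]] ?]. Qed.

Lemma good3_two_zeros (a b c : 'I_3) :
  count (fun d : 'I_3 => d == 0 :> nat) [:: a; b; c] = 2 -> good3 a b c.
Proof. by case: a b c => [[|[|[|//]]] ?] [[|[|[|//]]] ?] [[|[|[|//]]] ?]. Qed.

Lemma separated3C12 m (x y z : vec m) : separated3 x y z -> separated3 y x z.
Proof. by case=> k sep_k; exists k; apply: good3C12. Qed.

Lemma separated3C23 m (x y z : vec m) : separated3 x y z -> separated3 x z y.
Proof. by case=> k sep_k; exists k; apply: good3C23. Qed.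

Lemma admissible_separated3 m (S : {set vec m}) (x y z : vec m) :
  admissible S -> x \in S -> y \in S -> z \in S -> (x != y) || (y != z) ->
  separated3 x y z.
Proof.
move=> /admissibleP[pairS tripleS] xS yS zS.
have two_zeros (u v w : vec m) k : count (fun d : 'I_3 => d == 0 :> nat)
    [:: tnth u k; tnth v k; tnth w k] = 2 -> separated3 u v w.
  by move=> cnt; exists k; apply: good3_two_zeros.
have [<- /= yz | xy _] := eqVneq x y.
  have [k /andP[xk zk]] := pairS x z xS zS yz.
  by apply: (two_zeros _ _ _ k); rewrite /= xk (negbTE zk).
have [zx | xz] := eqVneq z x.
  have [k /andP[xk yk]] := pairS x y xS yS xy.
  by apply: (two_zeros _ _ _ k); rewrite zx /= xk (negbTE yk).
have [zy | yz] := eqVneq z y.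
  have [k /andP[yk xk]] : zero_nonzero y x by apply: pairS; rewrite // eq_sym.
  by apply: (two_zeros _ _ _ k); rewrite zy /= yk (negbTE xk).
by apply: tripleS; rewrite // eq_sym.
Qed.

Lemma weight_ltn_zero_nonzero m (x y : vec m) :
  weight x < weight y -> zero_nonzero x y.
Proof.
move=> wxy.
have [k /andP[xk yk] | none] :=
  pickP [pred k : 'I_m | (tnth x k == 0 :> nat) && (tnth y k != 0 :> nat)].
  by exists k; rewrite xk yk.
suff: weight y <= weight x by rewrite leqNgt wxy.
apply/subset_leq_card/subsetP => k; rewrite !inE => yk.
by apply: contraFN (none k) => xk; rewrite /= xk yk.
Qed.

Lemma block_index_subproof m r (i : 'I_r) (k : 'I_m) : i * m + k < m * r.
Proof. have := ltn_ord i; have := ltn_ord k; nia. Qed.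

Definition block_index m r (i : 'I_r) (k : 'I_m) : 'I_(m * r) :=
  Ordinal (block_index_subproof i k).

Lemma tnth_block m r (v : vec (m * r)) (i : 'I_r) (k : 'I_m) :
  tnth (block v i) k = tnth v (block_index i k).
Proof. by rewrite (tnth_nth ord0) /= nth_mkseq // (tnth_nth ord0). Qed.

Lemma block_inj m r (v v' : vec (m * r)) :
  (forall i, block v i = block v' i) -> v = v'.
Proof.
move=> eq_blocks; apply: eq_from_tnth => n.
have m_gt0 : 0 < m by case: m v v' eq_blocks n => [|//] ? ? ? [].
have i_lt : n %/ m < r by rewrite ltn_divLR //; have := ltn_ord n; lia.
have k_lt : n %% m < m by rewrite ltn_mod.
have -> : n = block_index (Ordinal i_lt) (Ordinal k_lt).
  by apply: val_inj; rewrite /= -divn_eq.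
by rewrite -!tnth_block eq_blocks.
Qed.

Lemma exists_block_neq m r (v v' : vec (m * r)) :
  v != v' -> exists i, block v i != block v' i.
Proof.
move=> vv'; apply/existsP; apply: contraNT vv' => /existsPn same.
by apply/eqP/block_inj => i; apply/eqP/negbNE/same.
Qed.

Lemma zero_nonzero_block m r (x y : vec (m * r)) (i : 'I_r) :
  zero_nonzero (block x i) (block y i) -> zero_nonzero x y.
Proof. by case=> k xy_k; exists (block_index i k); rewrite -!tnth_block. Qed.

Lemma separated3_block m r (x y z : vec (m * r)) (i : 'I_r) :
  separated3 (block x i) (block y i) (block z i) -> separated3 x y z.
Proof. by case=> k sep_k; exists (block_index i k); rewrite -!tnth_block. Qed.

Lemma composeP m r (T : {set vec r}) (S0 S1 S2 : {set vec m}) v :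
  v \in compose T S0 S1 S2 ->
  exists2 t, t \in T & forall i, block v i \in selectS S0 S1 S2 (tnth t i).
Proof. by rewrite inE => /exists_inP[t tT /forallP vt]; exists t. Qed.

Section MetaExtendable.

Variables (m : nat) (S0 S1 S2 : {set vec m}).
Hypothesis S_meta : meta_extendable S0 S1 S2.
Local Notation S_ := (selectS S0 S1 S2).

Lemma selectS_admissible (a : 'I_3) : admissible (S_ a).
Proof. by case: S_meta => [S0adm [S1adm [S2adm _]]]; case: a => [[|[|[|//]]] ?]. Qed.

Lemma selectS_zero_nonzero (a b : 'I_3) x y :
  a == 0 :> nat -> b != 0 :> nat -> x \in S_ a -> y \in S_ b -> zero_nonzero x y.
Proof.
case: S_meta => [_ [_ [_ [weight_lt _]]]].
case: a b => [[|[|[|//]]] ?] [[|[|[|//]]] ?] //= _ _ xS yS;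
  by apply/weight_ltn_zero_nonzero/weight_lt; rewrite // inE yS ?orbT.
Qed.

Lemma selectS_separated3 (a b c : 'I_3) x y z : good3 a b c ->
  x \in S_ a -> y \in S_ b -> z \in S_ c -> separated3 x y z.
Proof.
case: S_meta => [_ [_ [_ [_ [sep00 sep012]]]]].
wlog ab : a b c x y z / a <= b.
  move=> sorted g xS yS zS; have [ab | /ltnW ba] := leqP a b.
    exact: sorted g xS yS zS.
  exact/separated3C12/(sorted b a c y x z ba (good3C12 g)).
wlog bc : a b c x y z ab / b <= c.
  move=> sorted g xS yS zS; have [bc | /ltnW cb] := leqP b c.
    exact: sorted g xS yS zS.
  apply/separated3C23; have [ac | /ltnW ca] := leqP a c.
    exact: sorted a c b x z y ac cb (good3C23 g) xS zS yS.
  exact/separated3C12/(sorted c a b z x y ca ab (good3C12 (good3C23 g)) zS xS yS).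
(* The sorted good patterns are (0,0,1), (0,0,2) and (0,1,2). *)
move: ab bc.
case: a b c => [[|[|[|//]]] ?] [[|[|[|//]]] ?] [[|[|[|//]]] ?] //= _ _ _ xS yS zS.
- by apply: sep00; rewrite // inE zS.
- by apply: sep00; rewrite // inE zS orbT.
- exact: sep012.
Qed.

Variables (r : nat) (T : {set vec r}).
Hypothesis T_adm : admissible T.
Local Notation C := (compose T S0 S1 S2).

Lemma compose_zero_nonzero (v v' : vec (m * r)) :
  v \in C -> v' \in C -> v != v' -> zero_nonzero v v'.
Proof.
move=> /composeP[t tT vt] /composeP[t' t'T v't'] vv'.
have [eq_t | tt'] := eqVneq t t'.
  subst t'; have [i vi] := exists_block_neq vv'.
  have /admissibleP[pairS _] := selectS_admissible (tnth t i).
  exact: zero_nonzero_block (pairS _ _ (vt i) (v't' i) vi).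
have /admissibleP[pairT _] := T_adm.
have [i /andP[ti t'i]] := pairT t t' tT t'T tt'.
exact: zero_nonzero_block (selectS_zero_nonzero ti t'i (vt i) (v't' i)).
Qed.

Lemma compose_separated3 (v v' v'' : vec (m * r)) :
  v \in C -> v' \in C -> v'' \in C -> v != v' -> separated3 v v' v''.
Proof.
move=> /composeP[t tT vt] /composeP[t' t'T v't'] /composeP[t'' t''T v''t''] vv'.
have [/andP[/eqP eq_t /eqP eq_t'] | ] := boolP ((t == t') && (t' == t'')).
  subst t' t''; have [i vi] := exists_block_neq vv'.
  apply: (separated3_block (i := i)).
  by apply: (admissible_separated3 (selectS_admissible (tnth t i))); rewrite ?vi.
rewrite negb_and => not_all_eq.
have [i g] := admissible_separated3 T_adm tT t'T t''T not_all_eq.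
exact: separated3_block (selectS_separated3 g (vt i) (v't' i) (v''t'' i)).
Qed.

End MetaExtendable.

Theorem lemma3p6 (m r : nat) (S0 S1 S2 : {set vec m}) (T : {set vec r}) :
  meta_extendable S0 S1 S2 -> admissible T ->
  admissible (compose T S0 S1 S2).
Proof.
move=> S_meta T_adm; apply/admissibleP; split=> [v v' | v v' v''] vC v'C.
  exact: (compose_zero_nonzero S_meta T_adm vC v'C).
by move=> v''C vv' _ _; apply: (compose_separated3 S_meta T_adm vC v'C v''C vv').
Qed.
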